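(* Let $W$ be the affine Weyl group of type $A_2^{(1)}$ and $N\in\mathbb{N}$. Let $w\in W^0$ with $\mathcal{L}_{\Lambda_0}(w)=N$. Then (1) $\mathcal{O}_N(w)=\bigsqcup_{i=0}^{2}\widehat{O}_N(\sigma_i w)$; (2) $\mathcal{U}(12N+4)=\bigsqcup_{v\in\widehat{\mathcal{B}}(N)}\widehat{O}_N(v)$.
   Context: Affine Kac–Moody setting of type $A_2^{(1)}$: $\mathfrak{h}^*$ contains simple roots $\alpha_0,\alpha_1,\alpha_2$, null root $\delta=\alpha_0+\alpha_1+\alpha_2$, the affine fundamental weight $\Lambda_0$, and $\rho^\vee\in\mathfrak h$ satisfies $\langle\alpha_i,\rho^\vee\rangle=1$ for all $i$; $c=\alpha_0^\vee+\alpha_1^\vee+\alpha_2^\vee$ is the canonical central element. The finite part $V_0=\mathbb{R}\alpha_1\oplus\mathbb{R}\alpha_2$ is identified with $\{x\in\mathbb{R}^3\mid x_1+x_2+x_3=0\}$ via $\alpha_1=\varepsilon_1-\varepsilon_2$, $\alpha_2=\varepsilon_2-\varepsilon_3$, with the standard dot product $(\cdot|\cdot)$ (extended to the standard invariant form on $\mathfrak h^*$). For $x\in V_0$, $t_x\in GL(\mathfrak h^* )$ is $t_x(v)=v+\langle v,c\rangle x-((v|x)+\frac12|x|^2\langle v,c\rangle)\delta$. $W_0=\langle s_1,s_2\rangle\cong S_3$ (permuting coordinates), $M=V_0\cap\mathbb{Z}^3$, $W=\langle s_0,s_1,s_2\rangle=T(M)\rtimes W_0$, and every $w\in W$ is uniquely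 $w=t_q\overline w$ with $q\in M$, $\overline w\in W_0$. $W^0=\{w\in W\mid \ell(ws_k)>\ell(w),\ k=1,2\}$ ($\ell$ = Coxeter length). Fundamental weights $\omega_1=(2/3,-1/3,-1/3)$, $\omega_2=(1/3,1/3,-2/3)$, $\omega_0=0$. $\sigma_0=e$, $\sigma_1=t_{\omega_1}s_1s_2$, $\sigma_2=t_{\omega_2}s_2s_1$ in the extended affine Weyl group $\widehat W=T(L)\rtimes W_0$, $L=\mathbb{Z}\omega_1+\mathbb{Z}\omega_2$; $\Sigma=\{\sigma_0,\sigma_1,\sigma_2\}$. For $g\in GL(\mathfrak h^* )$, the atomic length is $\mathcal{L}_{\Lambda_0}(g)=\langle\Lambda_0-g\Lambda_0,\rho^\vee\rangle$. $\widehat{\mathcal{B}}(N)=\{v\in\Sigma W^0\mid \mathcal{L}_{\Lambda_0}(v)=N\}$ where $\Sigma W^0=\{\sigma w\mid\sigma\in\Sigma, w\in W^0\}$. Let $M_0=\mathrm{id}$, $M_1(q_1,q_2,q_3)=(q_3,q_1,q_2)$, $M_2(q_1,q_2,q_3)=(q_2,q_3,q_1)$ (the matrices of $e$, $s_1s_2$, $s_2s_1$). Let $p:\mathbb{R}^3\to\mathbb{R}^2$, $p(x,y,z)=(3x+6y-1,3x-1)$, and $R=\frac12\begin{pmatrix}1&-3\\1&1\end{pmatrix}$. $\mathcal{U}(k)=\{(x,y)\in\mathbb{Z}^2\mid x^2+3y^2=k\}$. For $w=t_q\overline w\in W^0$ with $\mathcal{L}_{\Lambda_0}(w)=N$: $\mathcal{O}_N(w)=\{R^kp(q)\mid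 k=1,\dots,6\}$, and for $i\in\{0,1,2\}$, $\widehat{O}_N(\sigma_iw)=\{p(\omega_i+M_i(q)),\,-p(\omega_i+M_i(q))\}$. *)

From HB Require Import structures.
From mathcomp Require Import all_boot all_order all_algebra.
Set Implicit Arguments. Unset Strict Implicit. Unset Printing Implicit Defensive.
Import Order.TTheory GRing.Theory Num.Theory.
Local Open Scope ring_scope.

(* h^* : a vector v = c1*alpha_1 + c2*alpha_2 + lev*Lambda_0 + del*delta. *)
Record hsp := HS { hc1 : rat; hc2 : rat; hlev : rat; hdel : rat }.

Definition hadd (u v : hsp) : hsp :=
  HS (hc1 u + hc1 v) (hc2 u + hc2 v) (hlev u + hlev v) (hdel u + hdel v).
Definition hscale (a : rat) (v : hsp) : hsp :=
  HS (a * hc1 v) (a * hc2 v) (a * hlev v) (a * hdel v).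
Definition hsub (u v : hsp) : hsp := hadd u (hscale (-1) v).

Definition V3 := (rat * rat * rat)%type.
Definition dot3 (x y : V3) : rat := x.1.1 * y.1.1 + x.1.2 * y.1.2 + x.2 * y.2.
Definition add3 (x y : V3) : V3 := (x.1.1 + y.1.1, x.1.2 + y.1.2, x.2 + y.2).
Definition inV0 (x : V3) : Prop := x.1.1 + x.1.2 + x.2 = 0.

(* finite part of v in R^3, using alpha_1 = e1-e2, alpha_2 = e2-e3 *)
Definition finp (v : hsp) : V3 := (hc1 v, hc2 v - hc1 v, - hc2 v).
(* embedding V_0 -> h^* : x = x1 alpha_1 + (x1+x2) alpha_2 *)
Definition of_V0 (x : V3) : hsp := HS x.1.1 (x.1.1 + x.1.2) 0 0.

(* standard invariant form: V_0 orthogonal to Lambda_0, delta;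
   (Lambda_0|delta) = 1, (Lambda_0|Lambda_0) = (delta|delta) = 0 *)
Definition form (u v : hsp) : rat :=
  dot3 (finp u) (finp v) + hlev u * hdel v + hdel u * hlev v.

Definition Lambda0 : hsp := HS 0 0 1 0.
Definition delta : hsp := HS 0 0 0 1.
Definition alpha (i : nat) : hsp :=
  match i with
  | 0 => HS (-1) (-1) 0 1      (* alpha_0 = delta - alpha_1 - alpha_2 *)
  | 1 => HS 1 0 0 0
  | _ => HS 0 1 0 0
  end.

Definition pair_c (v : hsp) : rat := hlev v.
(* <v, rho^vee> with <alpha_i, rho^vee> = 1 (i = 0,1,2), <Lambda_0, rho^vee> := 0 *)
Definition pair_rho (v : hsp) : rat := hc1 v + hc2 v + 3 * hdel v.

(* simple reflections s_i v = v - <v, alpha_i^vee> alpha_i ; simply laced,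
   so <v, alpha_i^vee> = (v | alpha_i) *)
Definition s (i : nat) (v : hsp) : hsp := hsub v (hscale (form v (alpha i)) (alpha i)).

Definition t (x : V3) (v : hsp) : hsp :=
  hadd (hadd v (hscale (pair_c v) (of_V0 x)))
       (hscale (- (form v (of_V0 x) + (1/2) * dot3 x x * pair_c v)) delta).

Definition word (ws : seq 'I_3) : hsp -> hsp := foldr (fun (i : 'I_3) f => s i \o f) id ws.

Definition inW (w : hsp -> hsp) : Prop := exists ws, word ws = w.
Definition inW0 (w : hsp -> hsp) : Prop :=
  exists ws : seq 'I_3, all (fun i : 'I_3 => i != 0%N :> nat) ws /\ word ws = w.

Definition is_length (w : hsp -> hsp) (n : nat) : Prop :=
  (exists ws, size ws = n /\ word ws = w) /\
  (forall ws, word ws = w -> (n <= size ws)%N).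

Definition inWzero (w : hsp -> hsp) : Prop :=
  inW w /\ forall (k : nat), (k = 1 \/ k = 2)%N ->
    forall n m, is_length w n -> is_length (w \o s k) m -> (n < m)%N.

Definition atomic_len (g : hsp -> hsp) : rat := pair_rho (hsub Lambda0 (g Lambda0)).

Definition omega (i : nat) : V3 :=
  match i with
  | 0 => (0, 0, 0)
  | 1 => (2/3, -1/3, -1/3)
  | _ => (1/3, 1/3, -2/3)
  end.

Definition sigma (i : nat) : hsp -> hsp :=
  match i with
  | 0 => id
  | 1 => t (omega 1) \o s 1 \o s 2
  | _ => t (omega 2) \o s 2 \o s 1
  end.

Definition Mperm (i : nat) (q : V3) : V3 :=
  match i with
  | 0 => q
  | 1 => (q.2, q.1.1, q.1.2)
  | _ => (q.1.2, q.2, q.1.1)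
  end.

Definition inM (q : V3) : Prop :=
  (exists a b c : int, q = (a%:~R, b%:~R, c%:~R)) /\ inV0 q.

Definition decomp (w : hsp -> hsp) (q : V3) : Prop :=
  inM q /\ exists wb, inW0 wb /\ w = t q \o wb.

Definition P2 := (rat * rat)%type.
Definition neg2 (x : P2) : P2 := (- x.1, - x.2).

Definition p (x : V3) : P2 := (3 * x.1.1 + 6 * x.1.2 - 1, 3 * x.1.1 - 1).
Definition Rm (x : P2) : P2 := ((x.1 - 3 * x.2) / 2, (x.1 + x.2) / 2).

Definition U (k : int) (x : P2) : Prop :=
  exists a b : int, x = (a%:~R, b%:~R) /\ a ^+ 2 + 3 * b ^+ 2 = k.

Definition Oset (w : hsp -> hsp) (x : P2) : Prop :=
  exists q, decomp w q /\ exists k : nat, (1 <= k <= 6)%N /\ x = iter k Rm (p q).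

Definition Ohat (v : hsp -> hsp) (x : P2) : Prop :=
  exists (i : 'I_3) (w : hsp -> hsp) (q : V3),
    inWzero w /\ v = sigma i \o w /\ decomp w q /\
    (x = p (add3 (omega i) (Mperm i q)) \/ x = neg2 (p (add3 (omega i) (Mperm i q)))).

Definition inSigmaW0 (v : hsp -> hsp) : Prop :=
  exists (i : 'I_3) w, inWzero w /\ v = sigma i \o w.

Definition inBhat (N : nat) (v : hsp -> hsp) : Prop :=
  inSigmaW0 v /\ atomic_len v = N%:R.

(* Every element of the extended affine Weyl group is an affine map t_y ∘ π with
   y ∈ V_0 and π a permutation of coordinates; these compose by the semidirect
   product law, W consists of those with y ∈ M, and σ_i ∘ t_q π = t_{ω_i + M_i q} M_i π.
   Hence Ô_N(σ_i w) = {±p(ω_i + M_i q)}.  On p(V_0) the matrix R is a rotation of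
   order 6 for the form x² + 3y² with R p(q) = -p(ω_1 + M_1 q), so the R-orbit of
   p(q) is the union of the three sets Ô_N(σ_i w); they are disjoint because
   p(ω_i + M_i q) mod 3 determines i.  For (2), x² + 3y² at p(y) equals
   12 L_{Λ_0}(t_y π) + 4; congruences mod 2 and 3 show that every integral solution
   of x² + 3y² = 12N + 4 is ±p(ω_i + M_i q) for unique i and q ∈ M; and each coset
   t_q W_0 has a unique element of W^0, found with the Iwahori–Matsumoto length
   formula. *)

From Pilot Require Import Defs.
From mathcomp Require Import all_boot all_order all_algebra.
From mathcomp Require Import ring lra zify.
From Stdlib Require Import FunctionalExtensionality.
Set Implicit Arguments. Unset Strict Implicit. Unset Printing Implicit Defensive.
Import Order.TTheory GRing.Theory Num.Theory.
Local Open Scope ring_scope.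

Inductive perm3 := p123 | p213 | p132 | p321 | p312 | p231.

Definition permute3 (T : Type) (pi : perm3) (x : T * T * T) : T * T * T :=
  match pi with
  | p123 => x
  | p213 => (x.1.2, x.1.1, x.2)
  | p132 => (x.1.1, x.2, x.1.2)
  | p321 => (x.2, x.1.2, x.1.1)
  | p312 => (x.2, x.1.1, x.1.2)
  | p231 => (x.1.2, x.2, x.1.1)
  end.

(* A permutation is recorded by where it sends the index triple (1, 2, 3). *)
Definition perm3_of (x : nat * nat * nat) : perm3 :=
  match x with
  | (2, 1, 3) => p213 | (1, 3, 2) => p132 | (3, 2, 1) => p321
  | (3, 1, 2) => p312 | (2, 3, 1) => p231 | _ => p123
  end%N.

Definition pmul (pi rho : perm3) : perm3 :=
  perm3_of (permute3 pi (permute3 rho (1, 2, 3)%N)).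

Lemma permute3_mul T pi rho (x : T * T * T) :
  permute3 (pmul pi rho) x = permute3 pi (permute3 rho x).
Proof. by case: x => [[x1 x2] x3]; case: pi; case: rho. Qed.

Lemma inV0_permute3 pi x : inV0 x -> inV0 (permute3 pi x).
Proof. by rewrite /inV0; case: pi => /=; lra. Qed.

Definition pact (pi : perm3) (v : hsp) : hsp :=
  let x := permute3 pi (finp v) in HS x.1.1 (x.1.1 + x.1.2) (hlev v) (hdel v).

Lemma finp_pact pi v : finp (pact pi v) = permute3 pi (finp v).
Proof. by case: v => c1 c2 l d; case: pi; rewrite /finp /=; congr (_, _, _); ring. Qed.

Lemma pact1 : pact p123 = id.
Proof.
by apply: functional_extensionality => -[c1 c2 l d]; rewrite /pact /=; congr HS; ring.
Qed.

Lemma pact_mul pi rho : pact pi \o pact rho = pact (pmul pi rho).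
Proof.
by apply: functional_extensionality => v; rewrite /= {1}/pact finp_pact -permute3_mul.
Qed.

Ltac hsp_ext := apply: functional_extensionality => -[c1 c2 l d];
  rewrite /s /t /pact /of_V0 /hsub /hadd /hscale /Defs.form /dot3 /finp /pair_c /=; congr HS.

Lemma t_add x y : inV0 x -> inV0 y -> t x \o t y = t (add3 x y).
Proof.
case: x => [[x1 x2] x3]; case: y => [[y1 y2] y3]; rewrite /inV0 /= => hx hy.
have -> : x3 = - x1 - x2 by lra.
have -> : y3 = - y1 - y2 by lra.
by hsp_ext; rewrite /add3 /=; field.
Qed.

Lemma pact_t pi x : inV0 x -> pact pi \o t x = t (permute3 pi x) \o pact pi.
Proof.
case: x => [[x1 x2] x3]; rewrite /inV0 /= => hx; have -> : x3 = - x1 - x2 by lra.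
by case: pi; hsp_ext; field.
Qed.

Lemma t0 : t (0, 0, 0) = id.
Proof. by hsp_ext; field. Qed.

Lemma t_pact_mul x y pi rho : inV0 x -> inV0 y ->
  (t x \o pact pi) \o (t y \o pact rho) = t (add3 x (permute3 pi y)) \o pact (pmul pi rho).
Proof.
move=> hx hy; apply: functional_extensionality => v /=.
have /= -> := congr1 (fun f => f (pact rho v)) (pact_t pi hy).
have /= -> := congr1 (fun f => f (pact pi (pact rho v))) (t_add hx (inV0_permute3 pi hy)).
by have /= -> := congr1 (fun f => f v) (pact_mul pi rho).
Qed.

Lemma s1_affine : s 1 = t (0, 0, 0) \o pact p213.
Proof. by rewrite t0; hsp_ext; field. Qed.

Lemma s2_affine : s 2 = t (0, 0, 0) \o pact p132.
Proof. by rewrite t0; hsp_ext; field. Qed.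

Lemma s0_affine : s 0 = t (1, 0, -1) \o pact p321.
Proof. by hsp_ext; field. Qed.

Lemma t_pact_inj x y pi rho : inV0 x -> inV0 y ->
  t x \o pact pi = t y \o pact rho -> x = y /\ pi = rho.
Proof.
case: x => [[x1 x2] x3]; case: y => [[y1 y2] y3]; rewrite /inV0 /= => hx hy E.
have eval v := congr1 (fun f : hsp -> hsp => f v) E.
move: (eval (HS 0 0 1 0)) (eval (HS 1 0 0 0)) (eval (HS 0 1 0 0)); clear eval E.
rewrite /t /pact /of_V0 /hsub /hadd /hscale /Defs.form /dot3 /finp /pair_c /=.
case: pi; case: rho => -[e1 e2 _ _] [f1 f2 _ _] [g1 g2 _ _].
all: split; [congr (_, _, _); lra | first [reflexivity | exfalso; lra]].
Qed.

Definition qv (a b : int) : V3 := (a%:~R, b%:~R, (- a - b)%:~R).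

Lemma qvE a b : qv a b = (a%:~R, b%:~R, - a%:~R - b%:~R).
Proof. by rewrite /qv intrB intrN. Qed.

Lemma inV0_qv a b : inV0 (qv a b).
Proof. by rewrite qvE /inV0 /=; ring. Qed.

Lemma inV0_0 : inV0 (0, 0, 0).
Proof. by rewrite /inV0 /=; ring. Qed.

Lemma inV0_theta : inV0 (1, 0, -1).
Proof. by rewrite /inV0 /=; ring. Qed.

Record elt := Elt { ta : int; tb : int; lin : perm3 }.

Definition elt_map (e : elt) : hsp -> hsp := t (qv (ta e) (tb e)) \o pact (lin e).

Lemma elt_map_lin pi : elt_map (Elt 0 0 pi) = pact pi.
Proof. by rewrite /elt_map (_ : qv 0 0 = (0, 0, 0)) ?t0 // qvE. Qed.

Definition lmul (i : nat) (e : elt) : elt :=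
  let: Elt a b pi := e in
  match i with
  | 0 => Elt (1 - a - b) b (pmul p321 pi)
  | 1 => Elt b a (pmul p213 pi)
  | _ => Elt a (- a - b) (pmul p132 pi)
  end.

Definition rmul (e : elt) (pi : perm3) : elt := Elt (ta e) (tb e) (pmul (lin e) pi).

Ltac V3_ring := rewrite /add3 ?qvE /= ?intrB ?intrN; congr (_, _, _); ring.

Lemma s_elt_map i e : s i \o elt_map e = elt_map (lmul i e).
Proof.
case: e => a b pi; rewrite /elt_map.
case: i => [|[|i]]; first rewrite s0_affine (t_pact_mul _ _ inV0_theta (inV0_qv a b)).
- by have -> : add3 (1, 0, -1) (permute3 p321 (qv a b)) = qv (1 - a - b) b by V3_ring.
- rewrite s1_affine (t_pact_mul _ _ inV0_0 (inV0_qv a b)).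
  by have -> : add3 (0, 0, 0) (permute3 p213 (qv a b)) = qv b a by V3_ring.
- rewrite (_ : s i.+2 = s 2) // s2_affine (t_pact_mul _ _ inV0_0 (inV0_qv a b)).
  by have -> : add3 (0, 0, 0) (permute3 p132 (qv a b)) = qv a (- a - b) by V3_ring.
Qed.

Lemma elt_map_pact e pi : elt_map e \o pact pi = elt_map (rmul e pi).
Proof. by rewrite /elt_map -compA pact_mul. Qed.

Lemma elt_map_inj e e' : elt_map e = elt_map e' -> e = e'.
Proof.
case: e e' => a b pi [a' b' pi'] /(t_pact_inj (inV0_qv _ _) (inV0_qv _ _)) [].
by rewrite /qv /= => -[/intr_inj -> /intr_inj -> _] ->.
Qed.

Section WordLength.

Variables (T G : Type) (act : G -> T -> T) (one : T) (len : T -> nat).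
Hypothesis len_one : len one = 0%N.
Hypothesis len_act : forall g x, (len (act g x) <= (len x).+1)%N.
Hypothesis act_invol : forall g x, act g (act g x) = x.
Hypothesis len_eq0 : forall x, len x = 0%N -> x = one.
Hypothesis len_descent : forall x, (0 < len x)%N -> exists g, (len (act g x)).+1 = len x.

Lemma len_foldr_le ws : (len (foldr act one ws) <= size ws)%N.
Proof.
elim: ws => [|g ws IH] /=; first by rewrite len_one.
exact: leq_trans (len_act _ _) _.
Qed.

Lemma reduced_word_exists x : exists ws, size ws = len x /\ foldr act one ws = x.
Proof.
move: {2}(len x) (erefl (len x)) => n; elim: n x => [|n IH] x hn.
  by exists [::]; rewrite (len_eq0 hn).
have [g hg] : exists g, (len (act g x)).+1 = len x by apply: len_descent; rewrite hn.
have [ws [hs hw]] : exists ws, size ws = len (act g x) /\ foldr act one ws = act g x.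
  by apply: IH; apply/eqP; rewrite -eqSS hg hn.
by exists (g :: ws); rewrite /= hs hw act_invol hg.
Qed.

End WordLength.

Definition elt1 : elt := Elt 0 0 p123.

Definition elt_of_word (ws : seq 'I_3) : elt := foldr (fun i : 'I_3 => lmul i) elt1 ws.

Lemma word_elt ws : word ws = elt_map (elt_of_word ws).
Proof.
elim: ws => [|i ws IH] /=; last by rewrite -s_elt_map -IH.
by rewrite elt_map_lin pact1.
Qed.

Definition inversion_set (pi : perm3) : int * int * int :=
  match pi with
  | p123 => (0, 0, 0) | p213 => (1, 0, 0) | p132 => (0, 1, 0)
  | p321 => (1, 1, 1) | p312 => (1, 0, 1) | p231 => (0, 1, 1)
  end.

(* Iwahori–Matsumoto: one term |<q, α> - ε_α| for each positive root
   α = α_1, α_2, α_1 + α_2, where ε_α = 1 iff the finite part makes α negative. *)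
Definition len_elt (e : elt) : nat :=
  let: Elt a b pi := e in let: (d1, d2, d3) := inversion_set pi in
  (absz (a - b - d1)%R + absz (a + 2 * b - d2)%R + absz (2 * a + b - d3)%R)%N.

Lemma len_lmul i e :
  len_elt (lmul i e) = (len_elt e).+1 \/ (len_elt (lmul i e)).+1 = len_elt e.
Proof. by case: e => a b pi; case: i => [|[|i]]; case: pi => /=; lia. Qed.

Lemma lmulK i e : lmul i (lmul i e) = e.
Proof. by case: e => a b pi; case: i => [|[|i]]; case: pi => /=; congr Elt; lia. Qed.

Lemma len_elt_eq0 e : len_elt e = 0%N -> e = elt1.
Proof.
case: e => a b pi; case: pi => /= h; have ha : a = 0 by lia.
all: have hb : b = 0 by lia.
all: by subst; first [done | lia].
Qed.

Lemma len_elt_descent e :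
  (0 < len_elt e)%N -> exists i : 'I_3, (len_elt (lmul i e)).+1 = len_elt e.
Proof.
have local_min : (len_elt e < len_elt (lmul 0 e))%N -> (len_elt e < len_elt (lmul 1 e))%N ->
    (len_elt e < len_elt (lmul 2 e))%N -> len_elt e = 0%N.
  by case: e => a b pi; case: pi => /=; lia.
move=> he.
case: (len_lmul 0 e) => h0; last by exists ord0.
case: (len_lmul 1 e) => h1; last by exists (@Ordinal 3 1 isT).
case: (len_lmul 2 e) => h2; last by exists (@Ordinal 3 2 isT).
by move: (local_min); rewrite h0 h1 h2 !ltnSn => /(_ isT isT isT); lia.
Qed.

Lemma is_length_elt e : is_length (elt_map e) (len_elt e).
Proof.
split.
  have [ws [hs hw]] := reduced_word_exists (erefl : len_elt elt1 = 0%N)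
                         (fun i : 'I_3 => lmulK i) len_elt_eq0 len_elt_descent e.
  by exists ws; rewrite word_elt /elt_of_word hw.
move=> ws; rewrite word_elt => /elt_map_inj <-.
by apply: len_foldr_le => // i x; case: (len_lmul i x) => h; lia.
Qed.

Lemma is_length_uniq w n m : is_length w n -> is_length w m -> n = m.
Proof.
move=> [[ws1 [<- e1]] min1] [[ws2 [<- e2]] min2].
by apply/eqP; rewrite eqn_leq min1 ?min2.
Qed.

Lemma inW_elt w : inW w -> exists e, w = elt_map e.
Proof. by case=> ws <-; exists (elt_of_word ws); rewrite word_elt. Qed.

Definition coset_min (e : elt) : Prop :=
  (len_elt e < len_elt (rmul e p213))%N /\ (len_elt e < len_elt (rmul e p132))%N.

Lemma inWzero_elt e : inWzero (elt_map e) <-> coset_min e.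
Proof.
have s1E : elt_map e \o s 1 = elt_map (rmul e p213) by rewrite s1_affine t0 elt_map_pact.
have s2E : elt_map e \o s 2 = elt_map (rmul e p132) by rewrite s2_affine t0 elt_map_pact.
split.
  case=> _ H; split.
    by apply: (H 1%N (or_introl erefl)); rewrite ?s1E; apply: is_length_elt.
  by apply: (H 2%N (or_intror erefl)); rewrite ?s2E; apply: is_length_elt.
case=> h1 h2; split; first by case: (is_length_elt e) => -[ws [_ <-]]; exists ws.
move=> k [->|->] n m /is_length_uniq/(_ (is_length_elt e)) -> hm.
  by rewrite s1E in hm; rewrite (is_length_uniq hm (is_length_elt _)).
by rewrite s2E in hm; rewrite (is_length_uniq hm (is_length_elt _)).
Qed.

Lemma coset_min_exists a b : exists pi, coset_min (Elt a b pi).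
Proof.
have : coset_min (Elt a b p123) \/ coset_min (Elt a b p213) \/ coset_min (Elt a b p132) \/
       coset_min (Elt a b p321) \/ coset_min (Elt a b p312) \/ coset_min (Elt a b p231).
  by rewrite /coset_min /=; lia.
by case=> [h|[h|[h|[h|[h|h]]]]]; eexists; exact: h.
Qed.

Lemma coset_min_uniq a b pi pi' :
  coset_min (Elt a b pi) -> coset_min (Elt a b pi') -> pi = pi'.
Proof. by case: pi; case: pi' => //; rewrite /coset_min /=; lia. Qed.

Lemma inW0_pact w : inW0 w <-> exists pi, w = pact pi.
Proof.
split.
  case=> ws [hws <-]; exists (lin (elt_of_word ws)); rewrite word_elt -elt_map_lin.
  congr elt_map; elim: ws hws => [|i ws IH] //= /andP [hi /IH].
  by case: (elt_of_word ws) => a b pi /= [-> ->]; case: i hi => [[|[|[|]]]].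
case=> pi ->; rewrite -elt_map_lin.
pose w1 := @Ordinal 3 1 isT; pose w2 := @Ordinal 3 2 isT.
have [ws hws] : exists ws,
    elt_of_word ws = Elt 0 0 pi /\ all (fun i : 'I_3 => i != 0%N :> nat) ws.
  by case: pi; [exists [::] | exists [:: w1] | exists [:: w2] | exists [:: w1; w2; w1]
                | exists [:: w1; w2] | exists [:: w2; w1]].
by exists ws; rewrite word_elt hws.1 hws.2.
Qed.

Lemma decompP w q : decomp w q <-> exists e, w = elt_map e /\ q = qv (ta e) (tb e).
Proof.
split.
  case=> [[[a [b [c ->]]] hq] [wb [/inW0_pact [pi ->] ->]]].
  have -> : c = - a - b.
    by apply: (@intr_inj rat); rewrite intrB intrN; move: hq; rewrite /inV0 /=; lra.
  by exists (Elt a b pi).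
case=> -[a b pi] [-> ->]; split.
  by split; [exists a, b, (- a - b) | exact: inV0_qv].
by exists (pact pi); split => //; apply/inW0_pact; exists pi.
Qed.

Lemma decomp_uniq w q q' : decomp w q -> decomp w q' -> q = q'.
Proof. by move=> /decompP [e [-> ->]] /decompP [e' [/elt_map_inj <- ->]]. Qed.

Definition mu (i : nat) : perm3 := match i with 0 => p123 | 1 => p312 | _ => p231 end.

Lemma Mperm_mu i q : Mperm i q = permute3 (mu i) q.
Proof. by case: i => [|[|i]]. Qed.

Lemma inV0_omega i : inV0 (omega i).
Proof. by rewrite /inV0; case: i => [|[|i]] /=; field. Qed.

Lemma sigma_affine i : sigma i = t (omega i) \o pact (mu i).
Proof.
case: i => [|[|i]]; first by rewrite /= pact1 t0.
  rewrite /sigma s1_affine s2_affine t0.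
  by change (t (omega 1) \o (pact p213 \o pact p132) = t (omega 1) \o pact p312); rewrite pact_mul.
rewrite /sigma s1_affine s2_affine t0.
by change (t (omega 2) \o (pact p132 \o pact p213) = t (omega 2) \o pact p231); rewrite pact_mul.
Qed.

Definition sigma_shift (i : nat) (q : V3) : V3 := add3 (omega i) (Mperm i q).

Lemma inV0_sigma_shift i q : inV0 q -> inV0 (sigma_shift i q).
Proof.
move=> /(inV0_permute3 (mu i)); rewrite /sigma_shift Mperm_mu.
by move: (inV0_omega i); rewrite /inV0 /add3 /=; lra.
Qed.

Lemma sigma_t_pact i q pi : inV0 q ->
  sigma i \o (t q \o pact pi) = t (sigma_shift i q) \o pact (pmul (mu i) pi).
Proof.
by move=> hq; rewrite sigma_affine (t_pact_mul _ _ (inV0_omega i) hq) /sigma_shift Mperm_mu.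
Qed.

Definition pm (R : zmodType) (sg : bool) (x : R * R) : R * R :=
  if sg then (- x.1, - x.2) else x.

Lemma OhatE (i : 'I_3) w q x : inWzero w -> decomp w q ->
  Ohat (sigma i \o w) x <-> exists sg, x = pm sg (p (sigma_shift i q)).
Proof.
move=> hw hd; split; last first.
  case=> sg ->; exists i, w, q; do !split => //.
  by case: sg; [right | left].
case=> i' [w' [q' [_ [hv [hd' hx]]]]].
have [e [he hq]] := (decompP w q).1 hd.
have [e' [he' hq']] := (decompP w' q').1 hd'.
move: hv; rewrite he he' hq hq' in hx *.
rewrite /elt_map !(sigma_t_pact _ _ (inV0_qv _ _)) => /t_pact_inj.
case=> [||-> _]; try by apply: inV0_sigma_shift; apply: inV0_qv.
by case: hx => ->; [exists false | exists true].
Qed.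

Lemma OsetE w q x : decomp w q ->
  Oset w x <-> exists k, (1 <= k <= 6)%N /\ x = iter k Rm (p q).
Proof.
move=> hd; split; first by case=> q' [/(decomp_uniq hd) <-].
by case=> k hk; exists q; split => //; exists k.
Qed.

Lemma pmK (R : zmodType) sg (x : R * R) : pm sg (pm sg x) = x.
Proof. by case: sg; rewrite /pm //= !opprK; case: x. Qed.

Lemma Rm_pm sg x : Rm (pm sg x) = pm sg (Rm x).
Proof. by case: sg; rewrite /Rm /pm //=; congr (_, _); field. Qed.

Lemma Rm_p_sigma_shift i q : inV0 q -> (i < 3)%N ->
  Rm (p (sigma_shift i q)) = pm true (p (sigma_shift (i.+1 %% 3) q)).
Proof.
case: q => [[q1 q2] q3]; rewrite /inV0 /= => hq; have -> : q3 = - q1 - q2 by lra.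
by case: i => [|[|[|//]]] _; rewrite /Rm /p /sigma_shift /add3 /=; congr (_, _); field.
Qed.

Lemma iter_Rm_p q k : inV0 q -> iter k Rm (p q) = pm (odd k) (p (sigma_shift (k %% 3) q)).
Proof.
move=> hq; elim: k => [|k IH].
  by rewrite /sigma_shift /add3 /p /=; congr (_, _); ring.
rewrite iterS IH Rm_pm Rm_p_sigma_shift ?ltn_pmod // -addn1 modnDml addn1.
by rewrite oddS; case: (odd k); rewrite ?pmK.
Qed.

Lemma Rm_orbitE q x : inV0 q ->
  (exists k, (1 <= k <= 6)%N /\ x = iter k Rm (p q)) <->
  exists (i : 'I_3) sg, x = pm sg (p (sigma_shift i q)).
Proof.
move=> hq; split.
  case=> k [hk ->]; rewrite iter_Rm_p //.
  by exists (@Ordinal 3 (k %% 3) (ltn_pmod k (isT : (0 < 3)%N))), (odd k).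
case=> i [sg ->].
have [k [hk ki ks]] : exists k, [/\ (1 <= k <= 6)%N, (k %% 3)%N = i & odd k = sg].
  by case: i => -[|[|[|//]]] ?; case: sg; [exists 3 | exists 6 | exists 1 | exists 4
                                              | exists 5 | exists 2].
by exists k; rewrite iter_Rm_p // ki ks.
Qed.

Definition sigma_pZ (i : nat) (a b : int) : int * int :=
  match i with
  | 0 => (3 * a + 6 * b - 1, 3 * a - 1)
  | 1 => (3 * a - 3 * b - 1, 1 - 3 * a - 3 * b)
  | _ => (2 - 6 * a - 3 * b, 3 * b)
  end.

Definition castp (z : int * int) : P2 := (z.1%:~R, z.2%:~R).

Lemma p_sigma_shift_qv i a b : p (sigma_shift i (qv a b)) = castp (sigma_pZ i a b).
Proof.
rewrite /sigma_shift /add3 /castp qvE /p.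
by case: i => [|[|i]]; rewrite /= ?intrD ?intrB ?intrM; congr (_, _); field.
Qed.

Lemma castp_pm sg z : castp (pm sg z) = pm sg (castp z).
Proof. by case: sg; rewrite /castp /pm //= !intrN. Qed.

Lemma castp_inj : injective castp.
Proof. by case=> [a b] [a' b'] [/intr_inj -> /intr_inj ->]. Qed.

(* The residues mod 3 of the two coordinates determine i and the sign. *)
Lemma sigma_pZ_inj (i j : 'I_3) sg sg' a b a' b' :
  pm sg (sigma_pZ i a b) = pm sg' (sigma_pZ j a' b') -> [/\ i = j, a = a' & b = b'].
Proof.
case: i => -[|[|[|//]]] ?; case: j => -[|[|[|//]]] ?; case: sg; case: sg';
  rewrite /pm /sigma_pZ /= => -[h1 h2];
  first [split; [exact: val_inj | lia | lia] | exfalso; lia].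
Qed.

Definition qnorm (R : pzRingType) (x : R * R) : R := x.1 ^+ 2 + 3 * x.2 ^+ 2.

Lemma qnorm_pm (R : pzRingType) sg (x : R * R) : qnorm (pm sg x) = qnorm x.
Proof. by case: sg; rewrite /qnorm /= ?sqrrN. Qed.

Lemma qnorm_castp z : qnorm (castp z) = (qnorm z)%:~R.
Proof. by rewrite /qnorm /castp /= !expr2 intrD !intrM. Qed.

Lemma UP k x : U k x <-> exists z, x = castp z /\ qnorm z = k.
Proof. by split=> [[a [b [-> h]]] | [[a b] [-> h]]]; [exists (a, b) | exists a, b]. Qed.

Lemma qnorm_p y pi : inV0 y -> qnorm (p y) = 12 * atomic_len (t y \o pact pi) + 4.
Proof.
case: y => [[y1 y2] y3]; rewrite /inV0 /= => hy; have -> : y3 = - y1 - y2 by lra.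
rewrite /qnorm /p /atomic_len /pair_rho /t /pact /hsub /hadd /hscale /Lambda0 /of_V0.
by rewrite /Defs.form /finp /dot3 /pair_c /=; case: pi => /=; field.
Qed.

Lemma qnorm_eq_sigma_pZ (z : int * int) (N : nat) : qnorm z = (12 * N + 4)%N ->
  exists (i : 'I_3) sg a b, z = pm sg (sigma_pZ i a b).
Proof.
case: z => A B; rewrite /qnorm /= => h.
(* A is prime to 3 and A ≡ B mod 2; the residues of A, B mod 3 then pick i and the sign. *)
have hA3 : (A %% 3)%Z <> 0 by nia.
have hAB2 : ((A - B) %% 2)%Z = 0 by nia.
have [hA|hA] : (A %% 3)%Z = 1 \/ (A %% 3)%Z = 2 by lia.
all: have [hB|[hB|hB]] : (B %% 3)%Z = 0 \/ (B %% 3)%Z = 1 \/ (B %% 3)%Z = 2 by lia.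
- exists (@Ordinal 3 2 isT), true, ((A + B + 2) %/ 6)%Z, ((- B) %/ 3)%Z.
  rewrite /pm /sigma_pZ /=; congr (_, _); lia.
- exists ord0, true, ((1 - B) %/ 3)%Z, ((B - A) %/ 6)%Z.
  rewrite /pm /sigma_pZ /=; congr (_, _); lia.
- exists (@Ordinal 3 1 isT), true, ((B - A + 2) %/ 6)%Z, ((A + B) %/ 6)%Z.
  rewrite /pm /sigma_pZ /=; congr (_, _); lia.
- exists (@Ordinal 3 2 isT), false, ((2 - A - B) %/ 6)%Z, (B %/ 3)%Z.
  rewrite /pm /sigma_pZ /=; congr (_, _); lia.
- exists (@Ordinal 3 1 isT), false, ((A - B + 2) %/ 6)%Z, ((- (A + B)) %/ 6)%Z.
  rewrite /pm /sigma_pZ /=; congr (_, _); lia.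
- exists ord0, false, ((B + 1) %/ 3)%Z, ((A - B) %/ 6)%Z.
  rewrite /pm /sigma_pZ /=; congr (_, _); lia.
Qed.

Lemma inWzero_elt_exists w : inWzero w -> exists e, w = elt_map e /\ coset_min e.
Proof. by move=> hw; have [e he] := inW_elt hw.1; exists e; rewrite -inWzero_elt -he. Qed.

Lemma decomp_elt e : decomp (elt_map e) (qv (ta e) (tb e)).
Proof. by apply/decompP; exists e. Qed.

Lemma Ohat_sigma_elt (i : 'I_3) e x : coset_min e ->
  Ohat (sigma i \o elt_map e) x <-> exists sg, x = castp (pm sg (sigma_pZ i (ta e) (tb e))).
Proof.
move=> /inWzero_elt he; rewrite (OhatE _ _ he (decomp_elt e)) p_sigma_shift_qv.
by split=> -[sg ->]; exists sg; rewrite castp_pm.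
Qed.

Lemma qnorm_sigma_pZ (i : 'I_3) e :
  (qnorm (sigma_pZ i (ta e) (tb e)))%:~R = 12 * atomic_len (sigma i \o elt_map e) + 4.
Proof.
rewrite /elt_map (sigma_t_pact _ _ (inV0_qv _ _)) -qnorm_p.
  by rewrite p_sigma_shift_qv qnorm_castp.
exact/inV0_sigma_shift/inV0_qv.
Qed.

Lemma Oset_decomposition w x :
  inWzero w -> Oset w x <-> exists i : 'I_3, Ohat (sigma i \o w) x.
Proof.
move=> hw; have [e [he _]] := inWzero_elt_exists hw; subst w.
have hd := decomp_elt e; rewrite (OsetE _ hd) (Rm_orbitE _ (inV0_qv _ _)).
split=> [[i [sg hx]] | [i /(OhatE _ _ hw hd) [sg hx]]]; exists i; last by exists sg.
by apply/(OhatE _ _ hw hd); exists sg.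
Qed.

Lemma Ohat_sigma_disjoint (i j : 'I_3) w x : inWzero w ->
  Ohat (sigma i \o w) x -> Ohat (sigma j \o w) x -> i = j.
Proof.
move=> hw; have [e [-> he]] := inWzero_elt_exists hw.
move=> /(Ohat_sigma_elt _ _ he) [sg ->] /(Ohat_sigma_elt _ _ he) [sg' /castp_inj].
by case/sigma_pZ_inj.
Qed.

Lemma Ohat_SigmaW0_disjoint v v' x : inSigmaW0 v -> inSigmaW0 v' ->
  Ohat v x -> Ohat v' x -> v = v'.
Proof.
move=> [i [w [hw ->]]] [j [w' [hw' ->]]].
have [[a b pi] [-> he]] := inWzero_elt_exists hw.
have [[a' b' pi'] [-> he']] := inWzero_elt_exists hw'.
move=> /(Ohat_sigma_elt _ _ he) [sg ->] /(Ohat_sigma_elt _ _ he') [sg' /castp_inj].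
case/sigma_pZ_inj => /= -> ha hb; move: he'; rewrite -ha -hb => he'.
by rewrite (coset_min_uniq he he').
Qed.

Lemma U_decomposition (N : nat) x :
  U (12 * N + 4)%N x <-> exists v, inBhat N v /\ Ohat v x.
Proof.
have lenE (i : 'I_3) e : atomic_len (sigma i \o elt_map e) = N%:R <->
    qnorm (sigma_pZ i (ta e) (tb e)) = (12 * N + 4)%N.
  have castN : (((12 * N + 4)%N : int)%:~R : rat) = 12 * N%:R + 4.
    by rewrite -pmulrn natrD natrM.
  have := qnorm_sigma_pZ i e; split=> [hL | hq].
    by apply: (@intr_inj rat); rewrite castN H hL.
  by move: H; rewrite hq castN; lra.
rewrite UP; split.
  case=> z [-> hq]; have [i [sg [a [b hz]]]] := qnorm_eq_sigma_pZ hq.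
  have [pi hpi] := coset_min_exists a b.
  exists (sigma i \o elt_map (Elt a b pi)); split.
    split; first by exists i, (elt_map (Elt a b pi)); rewrite inWzero_elt.
    by apply/lenE; rewrite -(qnorm_pm sg) -hz.
  by apply/Ohat_sigma_elt => //; exists sg; rewrite hz.
case=> v [[[i [w [hw ->]]] hN]].
have [e [hwe he]] := inWzero_elt_exists hw; subst w.
move=> /(Ohat_sigma_elt _ _ he) [sg ->]; exists (pm sg (sigma_pZ i (ta e) (tb e))).
by rewrite qnorm_pm; split => //; apply/lenE.
Qed.

Theorem theorem8p6 (N : nat) :
  (forall w : hsp -> hsp, inWzero w -> atomic_len w = N%:R ->
     (forall x : P2, Oset w x <-> exists i : 'I_3, Ohat (sigma i \o w) x) /\
     (forall (i j : 'I_3) (x : P2),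
        Ohat (sigma i \o w) x -> Ohat (sigma j \o w) x -> i = j)) /\
  ((forall x : P2, U (12 * N + 4)%N x <-> exists v, inBhat N v /\ Ohat v x) /\
   (forall (v v' : hsp -> hsp) (x : P2),
      inBhat N v -> inBhat N v' -> Ohat v x -> Ohat v' x -> v = v')).
Proof.
split.
  move=> w hw _; split=> [x | i j x]; first exact: Oset_decomposition.
  exact: Ohat_sigma_disjoint.
split; first exact: U_decomposition.
by move=> v v' x [hv _] [hv' _]; apply: Ohat_SigmaW0_disjoint.
Qed.
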